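(* Let $h(t)=\sqrt{1+\frac1t}$ and $H(t)=h(t)+\frac{1}{h(t)}$ for $t\in(0,\infty)$. Then for every integer $i\ge1$ and $t>0$, \[ h^{(i)}(t)=\frac{(-1)^i}{2^i t^{i+1}(1+t)^{i-1}h(t)}\sum_{k=0}^{i-1}a_{i,k}t^k,\qquad \Bigl[\frac{1}{h(t)}\Bigr]^{(i)}=\frac{(-1)^{i+1}}{2^i t^{i}(1+t)^{i}h(t)}\sum_{k=0}^{i-1}b_{i,k}t^k, \] \[ H^{(i)}(t)=\frac{(-1)^i}{2^i t^{i+1}(1+t)^{i}h(t)}\sum_{k=0}^{i-1}c_{i,k}t^k, \] where \[ a_{i,k}=\frac{(i-1)!\,i!\,(2i-2k-1)!!}{(i-k-1)!\,(i-k)!\,k!}2^k,\quad b_{i,k}=\frac{(i-1)!\,i!\,(2i-2k-3)!!}{(i-k-1)!\,(i-k)!\,k!}2^k,\quad c_{i,k}=\frac{(i-1)!\,(i+1)!\,(2i-2k-1)!!}{(i-k-1)!\,(i-k+1)!\,k!}2^k. \] Consequently, $h$ and $H$ are completely monotonic on $(0,\infty)$, and $\frac1h$ is a Bernstein function on $(0,\infty)$.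
   Context: Double factorials: $(2m-1)!!=1\cdot3\cdots(2m-1)$ for $m\ge1$, with $(-1)!!=1$. A function $f$ on an interval $I\subseteq\mathbb{R}$ is completely monotonic on $I$ if it has derivatives of all orders on $I$ and $(-1)^n f^{(n)}(t)\ge 0$ for all $t\in I$ and all integers $n\ge0$. A function $f:I\to[0,\infty)$ is a Bernstein function on $I$ if it has derivatives of all orders and $f'$ is completely monotonic on $I$. *)

From Stdlib Require Import Reals Factorial.
From Coquelicot Require Import Coquelicot.
Open Scope R_scope.

(* odd double factorial: dfact_odd m = (2m-1)!! = 1*3*...*(2m-1), with dfact_odd 0 = (-1)!! = 1 *)
Fixpoint dfact_odd (m : nat) : nat :=
  match m with
  | O => 1%nat
  | S m' => ((2 * m' + 1) * dfact_odd m')%nat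
  end.

Definition h (t : R) : R := sqrt (1 + / t).
Definition hinv (t : R) : R := / h t.
Definition HH (t : R) : R := h t + / h t.

(* a_{i,k}, b_{i,k}, c_{i,k} as real numbers; (2i-2k-1)!! = dfact_odd (i-k),
   (2i-2k-3)!! = dfact_odd (i-k-1) (for k <= i-1) *)
Definition a_coef (i k : nat) : R :=
  INR (fact (i - 1)) * INR (fact i) * INR (dfact_odd (i - k))
  / (INR (fact (i - k - 1)) * INR (fact (i - k)) * INR (fact k)) * 2 ^ k.
Definition b_coef (i k : nat) : R :=
  INR (fact (i - 1)) * INR (fact i) * INR (dfact_odd (i - k - 1))
  / (INR (fact (i - k - 1)) * INR (fact (i - k)) * INR (fact k)) * 2 ^ k.
Definition c_coef (i k : nat) : R :=
  INR (fact (i - 1)) * INR (fact (i + 1)) * INR (dfact_odd (i - k))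
  / (INR (fact (i - k - 1)) * INR (fact (i - k + 1)) * INR (fact k)) * 2 ^ k.

Definition completely_monotonic (f : R -> R) (I : R -> Prop) : Prop :=
  (forall (n : nat) (t : R), I t -> ex_derive_n f n t) /\
  (forall (n : nat) (t : R), I t -> 0 <= (-1) ^ n * Derive_n f n t).

Definition bernstein (f : R -> R) (I : R -> Prop) : Prop :=
  (forall t : R, I t -> 0 <= f t) /\
  (forall (n : nat) (t : R), I t -> ex_derive_n f n t) /\
  completely_monotonic (Derive f) I.

Definition pos_reals (t : R) : Prop := 0 < t.

From Stdlib Require Import Reals Lra Lia Factorial.
From Coquelicot Require Import Coquelicot.
Open Scope R_scope.

(** Since [h' = - h / (2 t (1 + t))], differentiating
    [K / (t^m (1 + t)^n h(t)) * P(t)] for a polynomial [P] gives a function of the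
    same shape, with [m] and [n] raised by one and a polynomial of one degree more
    whose coefficients are a two-term linear combination of those of [P].  The
    coefficients [a], [b], [c] satisfy precisely this recurrence (an identity
    between ratios of factorials), so the formulas follow by induction on [i].
    All coefficients are nonnegative, hence the derivatives alternate in sign. *)

Lemma h_pos t : 0 < t -> 0 < h t.
Proof.
  intros Ht. unfold h. apply sqrt_lt_R0.
  assert (0 < / t) by (apply Rinv_0_lt_compat; lra). lra.
Qed.

Lemma h_sqr t : 0 < t -> h t * h t = (1 + t) / t.
Proof.
  intros Ht. unfold h. rewrite sqrt_sqrt.
  - field. lra.
  - assert (0 < / t) by (apply Rinv_0_lt_compat; lra). lra.
Qed.

Lemma is_derive_h t : 0 < t -> is_derive h t (- h t / (2 * t * (1 + t))).
Proof.
  intros Ht. pose proof (h_pos t Ht). pose proof (h_sqr t Ht) as Hsq.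
  unfold h in *. auto_derive.
  - assert (0 < / t) by (apply Rinv_0_lt_compat; lra). repeat split; lra.
  - set (s := sqrt (1 + / t)) in *.
    replace (- s / (2 * t * (1 + t))) with (- (s * s) / (s * (2 * t * (1 + t))))
      by (field; lra).
    rewrite Hsq. field. lra.
Qed.

Lemma is_derive_hinv t : 0 < t -> is_derive hinv t (hinv t / (2 * t * (1 + t))).
Proof.
  intros Ht. pose proof (h_pos t Ht).
  unfold hinv.
  replace (/ h t / (2 * t * (1 + t)))
    with (- (- h t / (2 * t * (1 + t))) / h t ^ 2) by (field; lra).
  apply (is_derive_inv h); [apply is_derive_h; lra | lra].
Qed.

Definition poly_eval (a : nat -> R) (N : nat) (t : R) : R :=
  sum_f_R0 (fun k => a k * t ^ k) N.

Definition poly_deriv (a : nat -> R) (N : nat) (t : R) : R :=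
  sum_f_R0 (fun k => INR k * a k * t ^ pred k) N.

Lemma is_derive_poly_eval a N t : is_derive (poly_eval a N) t (poly_deriv a N t).
Proof.
  unfold poly_eval, poly_deriv. induction N as [|N IH].
  - simpl. auto_derive; [easy | ring].
  - eapply is_derive_ext; [intros u; symmetry; apply tech5|]. rewrite tech5.
    apply (is_derive_plus (fun u => sum_f_R0 (fun k => a k * u ^ k) N)); [exact IH|].
    auto_derive; [easy | simpl; ring].
Qed.

Lemma mult_poly_deriv a N t :
  t * poly_deriv a N t = sum_f_R0 (fun k => INR k * a k * t ^ k) N.
Proof.
  unfold poly_deriv. induction N as [|N IH]; simpl.
  - ring.
  - rewrite Rmult_plus_distr_l, IH. ring.
Qed.

Lemma sum_affine_weights a N t c1 d1 c2 d2 :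
  sum_f_R0 (fun k => (c1 - d1 * INR k) * a k * t ^ k
                   + (c2 - d2 * INR k) * a k * t ^ S k) N
  = c1 * poly_eval a N t + c2 * t * poly_eval a N t
    - d1 * (t * poly_deriv a N t) - d2 * t * (t * poly_deriv a N t).
Proof.
  rewrite !mult_poly_deriv. unfold poly_eval.
  induction N as [|N IH]; [simpl; ring|]. rewrite !tech5, IH. simpl. ring.
Qed.

Lemma poly_eval_shift (c p q : nat -> R) N t :
  c 0%nat = p 0%nat ->
  (forall k, (k < N)%nat -> c (S k) = p (S k) + q k) ->
  c (S N) = q N ->
  poly_eval c (S N) t = sum_f_R0 (fun k => p k * t ^ k + q k * t ^ S k) N.
Proof.
  intros H0 Hmid Htop. unfold poly_eval. rewrite tech5, Htop. clear Htop.
  induction N as [|N IH]; [simpl; rewrite H0; ring|].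
  rewrite !tech5, <- IH by (intros; apply Hmid; lia). rewrite (Hmid N) by lia.
  simpl. ring.
Qed.

Lemma INR_mult_pow_pred m x : x <> 0 -> INR m * x ^ pred m = INR m * x ^ m / x.
Proof. intros Hx. destruct m; simpl; field; exact Hx. Qed.

Lemma is_derive_scaled_poly K m n a N t : 0 < t ->
  is_derive (fun u => K / (u ^ m * (1 + u) ^ n * h u) * poly_eval a N u) t
    (- K / 2 / (t ^ S m * (1 + t) ^ S n * h t)
     * sum_f_R0 (fun k => (2 * INR m - 1 - 2 * INR k) * a k * t ^ k
                        + (2 * INR m + 2 * INR n - 2 * INR k) * a k * t ^ S k) N).
Proof.
  intros Ht. pose proof (h_pos t Ht).
  assert (t ^ m <> 0) by (apply pow_nonzero; lra).
  assert ((1 + t) ^ n <> 0) by (apply pow_nonzero; lra).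
  auto_derive.
  - repeat split; try (eexists; apply is_derive_h || apply is_derive_poly_eval); try lra.
    apply Rmult_integral_contrapositive; split;
      [apply Rmult_integral_contrapositive; split|]; lra.
  - replace (Derive (fun x => h x) t) with (- h t / (2 * t * (1 + t)))
      by (symmetry; apply is_derive_unique, is_derive_h; lra).
    replace (Derive (fun x => poly_eval a N x) t) with (poly_deriv a N t)
      by (symmetry; apply is_derive_unique, is_derive_poly_eval).
    rewrite sum_affine_weights.
    rewrite (INR_mult_pow_pred m t), (INR_mult_pow_pred n (1 + t)) by lra.
    simpl pow. field. repeat split; lra.
Qed.

(** The common shape of the three derivative formulas, with [i] the order of
    differentiation: [sg] shifts the sign and [dt], [d1] shift the exponents
    of [t] and [1 + t]. *)
Definition closed_form (sg dt d1 : nat) (c : nat -> nat -> R) (i : nat) (t : R) : R :=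
  (-1) ^ (i + sg) / (2 ^ i * t ^ (i + dt) * (1 + t) ^ (i - 1 + d1) * h t)
  * sum_f_R0 (fun k => c i k * t ^ k) (i - 1).

Definition coef_recurrence (dt d1 : nat) (c : nat -> nat -> R) : Prop :=
  forall n,
    let p k := (2 * INR (S n + dt) - 1 - 2 * INR k) * c (S n) k in
    let q k := (2 * INR (S n + dt) + 2 * INR (n + d1) - 2 * INR k) * c (S n) k in
    c (S (S n)) 0%nat = p 0%nat
    /\ (forall k, (k < n)%nat -> c (S (S n)) (S k) = p (S k) + q k)
    /\ c (S (S n)) (S n) = q n.

Lemma is_derive_closed_form sg dt d1 c n t :
  coef_recurrence dt d1 c -> 0 < t ->
  is_derive (closed_form sg dt d1 c (S n)) t (closed_form sg dt d1 c (S (S n)) t).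
Proof.
  intros Hrec Ht.
  assert (Hloc : locally t (fun u =>
             (-1) ^ (S n + sg) / 2 ^ S n / (u ^ (S n + dt) * (1 + u) ^ (n + d1) * h u)
             * poly_eval (c (S n)) n u = closed_form sg dt d1 c (S n) u)).
  { apply (filter_imp (fun u => 0 < u)); [|exact (open_gt 0 t Ht)].
    intros u Hu. pose proof (h_pos u Hu).
    unfold closed_form, poly_eval. replace (S n - 1)%nat with n by lia.
    field. repeat split; try apply pow_nonzero; lra. }
  eapply is_derive_ext_loc; [exact Hloc|].
  pose proof (is_derive_scaled_poly ((-1) ^ (S n + sg) / 2 ^ S n) (S n + dt) (n + d1)
                (c (S n)) n t Ht) as Hd.
  match type of Hd with
  | is_derive _ _ ?l => replace (closed_form sg dt d1 c (S (S n)) t) with l; [exact Hd|]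
  end.
  destruct (Hrec n) as (H0 & Hmid & Htop).
  unfold closed_form. replace (S (S n) - 1)%nat with (S n) by lia.
  change (sum_f_R0 (fun k => c (S (S n)) k * t ^ k) (S n))
    with (poly_eval (c (S (S n))) (S n) t).
  rewrite (poly_eval_shift _
             (fun k => (2 * INR (S n + dt) - 1 - 2 * INR k) * c (S n) k)
             (fun k => (2 * INR (S n + dt) + 2 * INR (n + d1) - 2 * INR k) * c (S n) k)
             n t H0 Hmid Htop).
  pose proof (h_pos t Ht).
  replace (S (S n) + dt)%nat with (S (S n + dt)) by lia.
  replace (S n + d1)%nat with (S (n + d1)) by lia.
  replace (S (S n) + sg)%nat with (S (S n + sg)) by lia.
  simpl pow. field. repeat split; try apply pow_nonzero; lra.
Qed.

Lemma Derive_n_chain (f : R -> R) (F : nat -> R -> R) :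
  (forall t, 0 < t -> F 0%nat t = f t) ->
  (forall m t, 0 < t -> is_derive (F m) t (F (S m) t)) ->
  forall m t, 0 < t -> Derive_n f m t = F m t /\ ex_derive_n f m t.
Proof.
  intros H0 HS m. induction m as [|m IH]; intros t Ht.
  - split; [symmetry; auto | exact I].
  - assert (Hloc : locally t (fun u => F m u = Derive_n f m u)).
    { apply (filter_imp (fun u => 0 < u)); [|exact (open_gt 0 t Ht)].
      intros u Hu. symmetry. apply IH, Hu. }
    split.
    + simpl. rewrite <- (Derive_ext_loc _ _ _ Hloc). apply is_derive_unique, HS, Ht.
    + simpl. eapply ex_derive_ext_loc; [exact Hloc|]. eexists. apply HS, Ht.
Qed.

Lemma Derive_n_closed_form sg dt d1 c (f : R -> R) :
  coef_recurrence dt d1 c ->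
  (forall t, 0 < t -> is_derive f t (closed_form sg dt d1 c 1 t)) ->
  forall n t, 0 < t ->
    Derive_n f (S n) t = closed_form sg dt d1 c (S n) t /\ ex_derive_n f n t.
Proof.
  intros Hrec Hf n t Ht.
  pose (F m := match m with O => f | S _ => closed_form sg dt d1 c m end).
  assert (HF : forall m t, 0 < t -> is_derive (F m) t (F (S m) t)).
  { intros [|m] u Hu; [apply Hf, Hu | apply is_derive_closed_form; assumption]. }
  split.
  - exact (proj1 (Derive_n_chain f F (fun _ _ => eq_refl) HF (S n) t Ht)).
  - exact (proj2 (Derive_n_chain f F (fun _ _ => eq_refl) HF n t Ht)).
Qed.

Lemma closed_form_sign sg dt d1 c i t :
  0 < t -> (forall k, 0 <= c i k) -> 0 <= (-1) ^ (i + sg) * closed_form sg dt d1 c i t.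
Proof.
  intros Ht Hc. pose proof (h_pos t Ht). unfold closed_form.
  set (D := 2 ^ i * t ^ (i + dt) * (1 + t) ^ (i - 1 + d1) * h t).
  assert (HD : 0 < D) by (unfold D; repeat apply Rmult_lt_0_compat; try apply pow_lt; lra).
  replace ((-1) ^ (i + sg) * ((-1) ^ (i + sg) / D * sum_f_R0 (fun k => c i k * t ^ k) (i - 1)))
    with (((-1) * (-1)) ^ (i + sg) * / D * sum_f_R0 (fun k => c i k * t ^ k) (i - 1))
    by (rewrite Rpow_mult_distr; field; lra).
  replace (-1 * -1) with 1 by ring. rewrite pow1.
  apply Rmult_le_pos; [apply Rmult_le_pos; [lra | left; apply Rinv_0_lt_compat, HD]|].
  apply cond_pos_sum. intros k. apply Rmult_le_pos; [apply Hc | apply pow_le; lra].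
Qed.

Lemma closed_form_completely_monotonic dt d1 c (f : R -> R) :
  coef_recurrence dt d1 c -> (forall i k, 0 <= c i k) ->
  (forall t, 0 < t -> 0 <= f t) ->
  (forall t, 0 < t -> is_derive f t (closed_form 0 dt d1 c 1 t)) ->
  completely_monotonic f pos_reals.
Proof.
  intros Hrec Hc Hf Hf'. split; intros n t Ht.
  - exact (proj2 (Derive_n_closed_form _ _ _ _ f Hrec Hf' n t Ht)).
  - destruct n as [|n]; [simpl; rewrite Rmult_1_l; apply Hf, Ht|].
    rewrite (proj1 (Derive_n_closed_form _ _ _ _ f Hrec Hf' n t Ht)).
    rewrite <- (Nat.add_0_r (S n)) at 1. apply closed_form_sign; [exact Ht | apply Hc].
Qed.

Lemma closed_form_bernstein dt d1 c (f : R -> R) :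
  coef_recurrence dt d1 c -> (forall i k, 0 <= c i k) ->
  (forall t, 0 < t -> 0 <= f t) ->
  (forall t, 0 < t -> is_derive f t (closed_form 1 dt d1 c 1 t)) ->
  bernstein f pos_reals.
Proof.
  intros Hrec Hc Hf Hf'.
  assert (HD : forall n t, Derive_n (Derive f) n t = Derive_n f (S n) t).
  { intros n t. rewrite <- Nat.add_1_r. exact (Derive_n_comp f n 1 t). }
  split; [exact Hf|]. split; [|split]; intros n t Ht.
  - exact (proj2 (Derive_n_closed_form _ _ _ _ f Hrec Hf' n t Ht)).
  - destruct n as [|n]; [exact I|].
    apply (ex_derive_ext (Derive_n f (S n))); [intros u; symmetry; apply HD|].
    exact (proj2 (Derive_n_closed_form _ _ _ _ f Hrec Hf' (S (S n)) t Ht)).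
  - rewrite HD, (proj1 (Derive_n_closed_form _ _ _ _ f Hrec Hf' n t Ht)).
    replace ((-1) ^ n) with ((-1) ^ (S n + 1)) by (replace (S n + 1)%nat with (n + 2)%nat by lia;
      rewrite pow_add; simpl; ring).
    apply closed_form_sign; [exact Ht | apply Hc].
Qed.

Lemma INR_fact_succ n : INR (fact (S n)) = INR (S n) * INR (fact n).
Proof. rewrite fact_simpl, mult_INR. reflexivity. Qed.

Lemma INR_dfact_odd_succ m : INR (dfact_odd (S m)) = (2 * INR m + 1) * INR (dfact_odd m).
Proof.
  change (dfact_odd (S m)) with ((2 * m + 1) * dfact_odd m)%nat.
  rewrite mult_INR, plus_INR, mult_INR. simpl (INR 2). simpl (INR 1). ring.
Qed.

(* Writing [i = k + j + 1] removes the truncated subtractions from the coefficients. *)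
Lemma a_coef_split i k j : i = S (k + j) ->
  a_coef i k = INR (fact (k + j)) * INR (fact (S (k + j))) * INR (dfact_odd (S j))
    / (INR (fact j) * INR (fact (S j)) * INR (fact k)) * 2 ^ k.
Proof.
  intros ->. unfold a_coef. replace (S (k + j) - 1)%nat with (k + j)%nat by lia.
  replace (S (k + j) - k - 1)%nat with j by lia. replace (S (k + j) - k)%nat with (S j) by lia.
  reflexivity.
Qed.

Lemma b_coef_split i k j : i = S (k + j) ->
  b_coef i k = INR (fact (k + j)) * INR (fact (S (k + j))) * INR (dfact_odd j)
    / (INR (fact j) * INR (fact (S j)) * INR (fact k)) * 2 ^ k.
Proof.
  intros ->. unfold b_coef. replace (S (k + j) - 1)%nat with (k + j)%nat by lia.
  replace (S (k + j) - k - 1)%nat with j by lia. replace (S (k + j) - k)%nat with (S j) by lia.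
  reflexivity.
Qed.

Lemma c_coef_split i k j : i = S (k + j) ->
  c_coef i k = INR (fact (k + j)) * INR (fact (S (S (k + j)))) * INR (dfact_odd (S j))
    / (INR (fact j) * INR (fact (S (S j))) * INR (fact k)) * 2 ^ k.
Proof.
  intros ->. unfold c_coef. replace (S (k + j) - 1)%nat with (k + j)%nat by lia.
  replace (S (k + j) + 1)%nat with (S (S (k + j))) by lia.
  replace (S (k + j) - k + 1)%nat with (S (S j)) by lia.
  replace (S (k + j) - k - 1)%nat with j by lia. replace (S (k + j) - k)%nat with (S j) by lia.
  reflexivity.
Qed.

Ltac solve_coef_identity :=
  rewrite ?Nat.add_succ_r, ?Nat.add_succ_l, ?Nat.add_0_l, ?Nat.add_0_r;
  rewrite ?INR_fact_succ, ?INR_dfact_odd_succ, ?S_INR, ?plus_INR; simpl pow; simpl (INR 0);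
  field; repeat split; try apply INR_fact_neq_0;
  repeat match goal with |- context [INR ?x] =>
    lazymatch goal with _ : 0 <= INR x |- _ => fail | _ => pose proof (pos_INR x) end end;
  lra.

Ltac solve_coef_recurrence split_lemma :=
  let k := fresh "k" in let Hk := fresh "Hk" in let j := fresh "j" in
  intros n; split; [|split; [intros k Hk|]];
  [ rewrite (split_lemma _ 0%nat (S n)), (split_lemma _ 0%nat n) by lia
  | destruct (Nat.le_exists_sub (S k) n Hk) as [j [-> _]];
    rewrite (split_lemma _ (S k) (S j)), (split_lemma _ (S k) j), (split_lemma _ k (S j)) by lia
  | rewrite (split_lemma _ (S n) 0%nat), (split_lemma _ n 0%nat) by lia ];
  solve_coef_identity.

Lemma a_coef_recurrence : coef_recurrence 1 0 a_coef.
Proof. solve_coef_recurrence a_coef_split. Qed.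

Lemma b_coef_recurrence : coef_recurrence 0 1 b_coef.
Proof. solve_coef_recurrence b_coef_split. Qed.

Lemma c_coef_recurrence : coef_recurrence 1 1 c_coef.
Proof. solve_coef_recurrence c_coef_split. Qed.

Lemma INR_fact_ratio_nonneg x y z u v w k :
  0 <= INR x * INR y * INR z / (INR (fact u) * INR (fact v) * INR (fact w)) * 2 ^ k.
Proof.
  apply Rmult_le_pos; [|apply pow_le; lra].
  apply Rmult_le_pos; [repeat apply Rmult_le_pos; apply pos_INR|].
  left. apply Rinv_0_lt_compat. repeat apply Rmult_lt_0_compat; apply INR_fact_lt_0.
Qed.

Lemma is_derive_h_closed_form t : 0 < t -> is_derive h t (closed_form 0 1 0 a_coef 1 t).
Proof.
  intros Ht. pose proof (h_pos t Ht). pose proof (h_sqr t Ht) as Hsq.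
  replace (closed_form 0 1 0 a_coef 1 t) with (- (h t * h t) / (h t * (2 * t * (1 + t)))).
  { replace (- (h t * h t) / (h t * (2 * t * (1 + t)))) with (- h t / (2 * t * (1 + t)))
      by (field; lra).
    apply is_derive_h, Ht. }
  rewrite Hsq. unfold closed_form, a_coef. simpl. field. lra.
Qed.

Lemma is_derive_hinv_closed_form t : 0 < t -> is_derive hinv t (closed_form 1 0 1 b_coef 1 t).
Proof.
  intros Ht. pose proof (h_pos t Ht).
  replace (closed_form 1 0 1 b_coef 1 t) with (hinv t / (2 * t * (1 + t)))
    by (unfold closed_form, b_coef, hinv; simpl; field; lra).
  apply is_derive_hinv, Ht.
Qed.

Lemma is_derive_HH_closed_form t : 0 < t -> is_derive HH t (closed_form 0 1 1 c_coef 1 t).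
Proof.
  intros Ht. pose proof (h_pos t Ht). pose proof (h_sqr t Ht) as Hsq.
  replace (closed_form 0 1 1 c_coef 1 t)
    with (- h t / (2 * t * (1 + t)) + hinv t / (2 * t * (1 + t))).
  { apply (is_derive_plus h hinv); [apply is_derive_h | apply is_derive_hinv]; exact Ht. }
  unfold hinv.
  replace (- h t / (2 * t * (1 + t)) + / h t / (2 * t * (1 + t)))
    with ((1 - h t * h t) / (h t * (2 * t * (1 + t)))) by (field; lra).
  rewrite Hsq. unfold closed_form, c_coef. simpl. field. lra.
Qed.

Lemma Derive_n_h i t : (1 <= i)%nat -> 0 < t ->
  Derive_n h i t =
    (-1) ^ i / (2 ^ i * t ^ (i + 1) * (1 + t) ^ (i - 1) * h t)
    * sum_f_R0 (fun k => a_coef i k * t ^ k) (i - 1).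
Proof.
  intros Hi Ht. destruct i as [|n]; [lia|].
  rewrite (proj1 (Derive_n_closed_form _ _ _ _ h a_coef_recurrence is_derive_h_closed_form n t Ht)).
  unfold closed_form. rewrite !Nat.add_0_r. reflexivity.
Qed.

Lemma Derive_n_hinv i t : (1 <= i)%nat -> 0 < t ->
  Derive_n hinv i t =
    (-1) ^ (i + 1) / (2 ^ i * t ^ i * (1 + t) ^ i * h t)
    * sum_f_R0 (fun k => b_coef i k * t ^ k) (i - 1).
Proof.
  intros Hi Ht. destruct i as [|n]; [lia|].
  rewrite (proj1 (Derive_n_closed_form _ _ _ _ hinv b_coef_recurrence
                    is_derive_hinv_closed_form n t Ht)).
  unfold closed_form. rewrite Nat.add_0_r. replace (S n - 1 + 1)%nat with (S n) by lia.
  reflexivity.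
Qed.

Lemma Derive_n_HH i t : (1 <= i)%nat -> 0 < t ->
  Derive_n HH i t =
    (-1) ^ i / (2 ^ i * t ^ (i + 1) * (1 + t) ^ i * h t)
    * sum_f_R0 (fun k => c_coef i k * t ^ k) (i - 1).
Proof.
  intros Hi Ht. destruct i as [|n]; [lia|].
  rewrite (proj1 (Derive_n_closed_form _ _ _ _ HH c_coef_recurrence
                    is_derive_HH_closed_form n t Ht)).
  unfold closed_form. rewrite Nat.add_0_r. replace (S n - 1 + 1)%nat with (S n) by lia.
  reflexivity.
Qed.

Theorem lemma2p1 :
  (forall (i : nat) (t : R), (1 <= i)%nat -> 0 < t ->
     Derive_n h i t =
       (-1) ^ i / (2 ^ i * t ^ (i + 1) * (1 + t) ^ (i - 1) * h t)
       * sum_f_R0 (fun k => a_coef i k * t ^ k) (i - 1)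
  /\ Derive_n hinv i t =
       (-1) ^ (i + 1) / (2 ^ i * t ^ i * (1 + t) ^ i * h t)
       * sum_f_R0 (fun k => b_coef i k * t ^ k) (i - 1)
  /\ Derive_n HH i t =
       (-1) ^ i / (2 ^ i * t ^ (i + 1) * (1 + t) ^ i * h t)
       * sum_f_R0 (fun k => c_coef i k * t ^ k) (i - 1))
  /\ completely_monotonic h pos_reals
  /\ completely_monotonic HH pos_reals
  /\ bernstein hinv pos_reals.
Proof.
  assert (hinv_pos : forall t, 0 < t -> 0 < hinv t)
    by (intros t Ht; apply Rinv_0_lt_compat, h_pos, Ht).
  split; [|split; [|split]].
  - intros i t Hi Ht. split; [|split].
    + apply Derive_n_h; assumption.
    + apply Derive_n_hinv; assumption.
    + apply Derive_n_HH; assumption.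
  - apply (closed_form_completely_monotonic 1 0 a_coef h a_coef_recurrence).
    + intros i k. apply INR_fact_ratio_nonneg.
    + intros t Ht. left. apply h_pos, Ht.
    + exact is_derive_h_closed_form.
  - apply (closed_form_completely_monotonic 1 1 c_coef HH c_coef_recurrence).
    + intros i k. apply INR_fact_ratio_nonneg.
    + intros t Ht. pose proof (h_pos t Ht). pose proof (hinv_pos t Ht).
      unfold HH, hinv in *. lra.
    + exact is_derive_HH_closed_form.
  - apply (closed_form_bernstein 0 1 b_coef hinv b_coef_recurrence).
    + intros i k. apply INR_fact_ratio_nonneg.
    + intros t Ht. left. apply hinv_pos, Ht.
    + exact is_derive_hinv_closed_form.
Qed.
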